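(* Let $R$ be a ring, $N$ a complex of left $R$-modules and $\{M_n\}_{n\in\mathbb{Z}}$ a family of left $R$-modules. Then $N\in\underline{\mathfrak{Pr}}^{-1}_{\mathscr{C}(R)}\big(\bigoplus_{n\in\mathbb{Z}}\overline{M_n}[n]\big)$ if and only if $N_{n+1}\in\underline{\mathfrak{Pr}}^{-1}_{R\text{-Mod}}(M_n)$ for every $n\in\mathbb{Z}$.
   Context: Complexes are homologically indexed. For a module $M$, $\overline{M}$ is the complex with $M$ in degrees $1$ and $0$, the identity of $M$ as differential $1\to0$, and $0$ elsewhere; for a complex $X$, $X[n]$ is the complex with $X[n]_i=X_{i-n}$ and differential $(-1)^nd^X_{i-n}$ (so $\overline{M}[n]$ has $M$ in degrees $n+1$ and $n$). For objects $M,N$ of an abelian category $\mathscr{A}$ with enough projectives ($R\text{-Mod}$ or the category $\mathscr{C}(R)$ of complexes), $M$ is $N$-subprojective if every morphism $M\to N$ factors through a projective object of $\mathscr{A}$; $\underline{\mathfrak{Pr}}^{-1}_{\mathscr{A}}(M)$ is the class of all $N$ such that $M$ is $N$-subprojective. *)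

From HB Require Import structures.
From mathcomp Require Import all_boot all_order all_algebra.
From mathcomp Require Import zify.
Set Implicit Arguments. Unset Strict Implicit. Unset Printing Implicit Defensive.
Import Order.TTheory GRing.Theory Num.Theory.
Local Open Scope ring_scope.

Definition lin_map (R : pzRingType) (U V : lmodType R) (f : U -> V) : Prop :=
  forall (a : R) (x y : U), f (a *: x + y) = a *: f x + f y.

Definition mod_projective (R : pzRingType) (P : lmodType R) : Prop :=
  forall (X Y : lmodType R) (g : X -> Y), lin_map g ->
    (forall y, exists x, g x = y) ->
  forall (f : P -> Y), lin_map f ->
    exists h : P -> X, lin_map h /\ forall p, g (h p) = f p.

Definition mod_subprojective (R : pzRingType) (M N : lmodType R) : Prop :=
  forall f : M -> N, lin_map f ->
    exists (P : lmodType R) (a : M -> P) (b : P -> N),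
      [/\ mod_projective P, lin_map a, lin_map b & forall m, f m = b (a m)].

Unset Implicit Arguments.
Record complex (R : pzRingType) := Complex {
  cobj :> int -> lmodType R;
  cd : forall i : int, cobj i -> cobj (i - 1);
  cd_lin : forall i : int, lin_map (cd i);
  cd_dd : forall i (x : cobj i), cd (i - 1) (cd i x) = 0 }.

Record cmor (R : pzRingType) (X Y : complex R) := CMor {
  cmap :> forall i : int, X i -> Y i;
  cmap_lin : forall i : int, lin_map (cmap i);
  cmap_comm : forall i (x : X i), cmap (i - 1) (cd R X i x) = cd R Y i (cmap i x) }.

Arguments cd {R} c i _ : rename.
Arguments cmap {R X Y} c i _ : rename.
Arguments cmor {R} X Y.
Set Implicit Arguments.

Definition cpx_projective (R : pzRingType) (P : complex R) : Prop :=
  forall (X Y : complex R) (g : cmor X Y),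
    (forall i (y : Y i), exists x : X i, g i x = y) ->
  forall f : cmor P Y, exists h : cmor P X, forall i (p : P i), g i (h i p) = f i p.

Definition cpx_subprojective (R : pzRingType) (M N : complex R) : Prop :=
  forall f : cmor M N,
    exists (P : complex R) (a : cmor M P) (b : cmor P N),
      cpx_projective P /\ forall i (m : M i), f i m = b i (a i m).

(* Degree i is M ^ [i = n or i = n+1], i.e. {ffun 'I_1 -> M} (a copy of M)
   in degrees n+1 and n, and {ffun 'I_0 -> M} (the zero module) elsewhere.
   The differential n+1 -> n is (-1)^n id, all other differentials are 0. *)
Definition disc_obj (R : pzRingType) (M : lmodType R) (n : int) (i : int)
  : lmodType R := {ffun 'I_((i == n) || (i == n + 1)) -> M}.

Definition disc_d (R : pzRingType) (M : lmodType R) (n : int) (i : int)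
  (f : disc_obj M n i) : disc_obj M n (i - 1) :=
  [ffun _ => (if i == n + 1 then (-1) ^+ `|n|%N else 0) *: \sum_k f k].

Lemma disc_coef_comm (R : pzRingType) (M : lmodType R) (b : bool) (k : nat)
  (a : R) (v : M) :
  (if b then (-1) ^+ k else 0) *: (a *: v) = a *: ((if b then (-1) ^+ k else 0) *: v).
Proof.
case: b; last by rewrite !scale0r scaler0.
by rewrite -signr_odd !scaler_sign; case: (odd k); rewrite ?scalerN.
Qed.

Lemma disc_d_lin (R : pzRingType) (M : lmodType R) n i : lin_map (@disc_d R M n i).
Proof.
rewrite /disc_obj => a x y; apply/ffunP=> j; rewrite /disc_d !ffunE.
rewrite (eq_bigr (fun k => a *: x k + y k)); last by move=> k _; rewrite !ffunE.
by rewrite big_split /= -scaler_sumr scalerDr disc_coef_comm.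
Qed.

Lemma disc_coef_prod0 (R : pzRingType) (b1 b2 : bool) (k1 k2 : nat) :
  (b2 -> ~~ b1) ->
  (if b1 then (-1) ^+ k1 else 0) * (if b2 then (-1) ^+ k2 else 0) = 0 :> R.
Proof. by case: b1; case: b2; rewrite ?mulr0 ?mul0r // => /(_ isT). Qed.

Lemma disc_d_dd (R : pzRingType) (M : lmodType R) n i (x : disc_obj M n i) :
  disc_d (disc_d x) = 0.
Proof.
move: x; rewrite /disc_obj => x; apply/ffunP=> j; rewrite /disc_d !ffunE.
rewrite (eq_bigr (fun=> (if i == n + 1 then (-1) ^+ `|n|%N else 0) *:
   \sum_k x k)); last by move=> k _; rewrite ffunE.
rewrite sumr_const scalerMnr scalerA disc_coef_prod0 ?scale0r ?mul0rn //.
move=> /eqP ->; apply/negP => /eqP; lia.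
Qed.

Definition disc_shift (R : pzRingType) (M : lmodType R) (n : int) : complex R :=
  @Complex R (disc_obj M n) (@disc_d R M n) (@disc_d_lin R M n) (@disc_d_dd R M n).

Definition is_coproduct (R : pzRingType) (D : int -> complex R) (S : complex R)
  (inj : forall n, cmor (D n) S) : Prop :=
  forall (Y : complex R) (f : forall n, cmor (D n) Y),
    exists g : cmor S Y,
      (forall n i (x : D n i), g i (inj n i x) = f n i x) /\
      (forall g' : cmor S Y, (forall n i (x : D n i), g' i (inj n i x) = f n i x) ->
         forall i (s : S i), g' i s = g i s).
Arguments is_coproduct {R} D S inj.

From HB Require Import structures.
From mathcomp Require Import all_boot all_order all_algebra.
From mathcomp Require Import zify.
From Stdlib Require Import ClassicalEpsilon.

(* A chain map out of the disc [\overline{M}[n]] is the same as a linear map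
   [M -> Y_(n+1)], and a chain map from a complex [P] into it is the same as a
   linear map [P_n -> M].

   (=>) Given [f : M_n -> N_(n+1)], the first adjunction and the coproduct
   property turn [f] into a chain map [S -> N]; factoring it through a
   projective complex [P] factors [f] through [P_(n+1)], which is a projective
   module by the second adjunction (lift along [\overline{X}[n] ->
   \overline{Y}[n]]).

   (<=) A chain map [f : S -> N] restricts to [g_n : M_n -> N_(n+1)]; factor
   each as [M_n -> Q_n -> N_(n+1)] with [Q_n] projective.  The complex with
   [Q_(i-1) (+) Q_i] in degree [i] and differential [(x, y) |-> (0, x)] is
   projective, receives every [M_n] and maps to [N] through the [Q_n], and
   the two composites out of [S] agree because they agree on each top copy
   of [M_n]. *)

Set Implicit Arguments.
Unset Strict Implicit.
Unset Printing Implicit Defensive.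
Import GRing.Theory.
Local Open Scope ring_scope.

Arguments cd_lin {R} c i.
Arguments cd_dd {R} c i x.
Arguments cmap_lin {R X Y} c i.
Arguments cmap_comm {R X Y} c i x.

Lemma dep_functional_choice (I : Type) (T : I -> Type) (P : forall i, T i -> Prop) :
  (forall i, exists x, P i x) -> exists f : forall i, T i, forall i, P i (f i).
Proof.
move=> h; exists (fun i => proj1_sig (constructive_indefinite_description _ (h i))).
by move=> i; exact: proj2_sig (constructive_indefinite_description _ (h i)).
Qed.

Section LinMap.
Variable R : pzRingType.

(* [lin_map f] is convertible to MathComp's [linear f]. *)
Definition linear_of_lin_map (U V : lmodType R) (f : U -> V) (fl : lin_map f) :
  {linear U -> V} := HB.pack f (GRing.isLinear.Build R U V *:%R f fl).

Variables (U V W : lmodType R).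

Lemma lin_map0 (f : U -> V) : lin_map f -> f 0 = 0.
Proof. by move=> fl; exact: raddf0 (linear_of_lin_map fl). Qed.

Lemma lin_mapD (f : U -> V) : lin_map f -> forall x y, f (x + y) = f x + f y.
Proof. by move=> fl x y; exact: raddfD (linear_of_lin_map fl) x y. Qed.

Lemma lin_mapZ (f : U -> V) : lin_map f -> forall a x, f (a *: x) = a *: f x.
Proof. by move=> fl a x; exact: linearZ_LR (linear_of_lin_map fl) a x. Qed.

Lemma lin_map_sum (f : U -> V) : lin_map f ->
  forall n (F : 'I_n -> U), f (\sum_i F i) = \sum_i f (F i).
Proof. by move=> fl n F; exact: raddf_sum (linear_of_lin_map fl) _ _ _ _. Qed.

Lemma lin_map_comp (f : V -> W) (g : U -> V) :
  lin_map f -> lin_map g -> lin_map (fun x => f (g x)).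
Proof. by move=> fl gl a x y; rewrite gl fl. Qed.

Lemma lin_map_add (f g : U -> V) :
  lin_map f -> lin_map g -> lin_map (fun x => f x + g x).
Proof. by move=> fl gl a x y; rewrite fl gl scalerDr addrACA. Qed.

Lemma lin_map_scale (c : R) (f : U -> V) :
  (forall a, GRing.comm c a) -> lin_map f -> lin_map (fun x => c *: f x).
Proof. by move=> cc fl a x y; rewrite fl scalerDr !scalerA cc. Qed.

Lemma lin_map_inl : lin_map (fun x : U => ((x, 0) : (U * V)%type)).
Proof. by move=> a x y; rewrite -[RHS]/(a *: x + y, a *: 0 + 0) scaler0 addr0. Qed.

Lemma lin_map_fst : lin_map (fun p : (U * V)%type => p.1).
Proof. by move=> a [? ?] [? ?]. Qed.

Lemma lin_map_snd : lin_map (fun p : (U * V)%type => p.2).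
Proof. by move=> a [? ?] [? ?]. Qed.

End LinMap.

Section Sign.
Variable R : pzRingType.

Definition sign_int (n : int) : R := (-1) ^+ `|n|%N.

Lemma sign_int_comm n (a : R) : GRing.comm (sign_int n) a.
Proof. exact/commr_sym/commr_sign. Qed.

Lemma sign_intZK (U : lmodType R) n (x : U) : sign_int n *: (sign_int n *: x) = x.
Proof. exact: signrZK. Qed.

End Sign.

Section DeltaCast.
Variable R : pzRingType.
Implicit Type F : int -> lmodType R.

Definition delta_cast (F : int -> lmodType R) (j k : int) (x : F j) : F k :=
  if j =P k is ReflectT e then eq_rect j F x k e else 0.
Arguments delta_cast : clear implicits.

Lemma delta_cast_id F j (x : F j) : delta_cast F j j x = x.
Proof. by rewrite /delta_cast; case: eqP => // e; rewrite eq_axiomK. Qed.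

Lemma delta_cast_neq F j k (x : F j) : j != k -> delta_cast F j k x = 0.
Proof. by rewrite /delta_cast; case: eqP. Qed.

Lemma delta_cast_lin F j k : lin_map (delta_cast F j k).
Proof.
move=> a x y; have [<-|ne] := eqVneq j k; first by rewrite !delta_cast_id.
by rewrite !delta_cast_neq // scaler0 addr0.
Qed.

Lemma delta_cast0 F j k : delta_cast F j k 0 = 0.
Proof. exact: lin_map0 (@delta_cast_lin F j k). Qed.

Lemma delta_cast_nat (F G : int -> lmodType R) (f : forall j, F j -> G j) :
  (forall j, f j 0 = 0) ->
  forall j k x, delta_cast G j k (f j x) = f k (delta_cast F j k x).
Proof.
move=> f0 j k x; have [<-|ne] := eqVneq j k; first by rewrite !delta_cast_id.
by rewrite !delta_cast_neq.
Qed.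

Lemma delta_cast_shift (F : int -> lmodType R) (s : int -> int) : injective s ->
  forall j k x, delta_cast (fun i => F (s i)) j k x = delta_cast F (s j) (s k) x.
Proof.
move=> s_inj j k x; have [<-|ne] := eqVneq j k; first by rewrite !delta_cast_id.
by rewrite !delta_cast_neq // (inj_eq s_inj).
Qed.

Lemma delta_cast_conj (F G : int -> lmodType R) (s t : int -> int)
    (f : forall j, F (t j) -> G (s j)) j k (y : F (t j)) :
  k = j -> delta_cast G (s k) (s j) (f k (delta_cast F (t j) (t k) y)) = f j y.
Proof. by move->; rewrite !delta_cast_id. Qed.

Lemma delta_cast_cd (X : complex R) j k (x : X j) :
  cd X k (delta_cast X j k x) = delta_cast X (j - 1) (k - 1) (cd X j x).
Proof.
rewrite -(@delta_cast_shift X (fun i => i - 1)); last exact: addIr.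
by rewrite (delta_cast_nat (f := cd X)) // => i; exact/lin_map0/cd_lin.
Qed.

Lemma delta_cast_cmap (X Y : complex R) (u : cmor X Y) j k (x : X j) :
  u k (delta_cast X j k x) = delta_cast Y j k (u j x).
Proof. by rewrite (delta_cast_nat (f := u)) // => i; exact/lin_map0/cmap_lin. Qed.

End DeltaCast.
Arguments delta_cast {R} F j k x.
Arguments delta_cast_lin {R} F j k.

Definition cmor_comp (R : pzRingType) (X Y Z : complex R)
    (g : cmor Y Z) (f : cmor X Y) : cmor X Z :=
  CMor R X Z (fun i x => g i (f i x))
    (fun i => lin_map_comp (cmap_lin g i) (cmap_lin f i))
    (fun i x => etrans (congr1 (g (i - 1)) (cmap_comm f i x)) (cmap_comm g i (f i x))).

Lemma cmor_compE (R : pzRingType) (X Y Z : complex R) (g : cmor Y Z) (f : cmor X Y) i x :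
  cmor_comp g f i x = g i (f i x).
Proof. by []. Qed.

Section Disc.
Variables (R : pzRingType) (M : lmodType R) (n : int).

Definition disc_val (b : bool) (v : {ffun 'I_b -> M}) : M := \sum_j v j.

Lemma disc_val_lin (b : bool) : lin_map (@disc_val b).
Proof.
move=> a x y; rewrite /disc_val scaler_sumr -big_split /=.
by apply: eq_bigr => j _; rewrite !ffunE.
Qed.

Lemma disc_valK (b : bool) (v : {ffun 'I_b -> M}) : v = [ffun _ => disc_val v].
Proof.
apply/ffunP; case: b v => v j; rewrite ffunE; last by case: j.
by rewrite /disc_val big_ord1; case: j => -[|//] ?; congr (v _); exact: val_inj.
Qed.

Lemma disc_obj_eq0 (b : bool) (v : {ffun 'I_b -> M}) : ~~ b -> v = 0.
Proof. by case: b v => // v _; apply/ffunP => -[]. Qed.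

Lemma disc_val_const (b : bool) (y : M) :
  disc_val ([ffun _ => y] : {ffun 'I_b -> M}) = if b then y else 0.
Proof. by case: b; rewrite /disc_val ?big_ord1 ?big_ord0 ?ffunE. Qed.

Lemma disc_val_d i (v : disc_obj M n i) :
  disc_val (disc_d v) = (if i == n + 1 then sign_int R n else 0) *: disc_val v.
Proof.
rewrite /disc_d disc_val_const -/(disc_val v); move: (disc_val v) => x.
case: (boolP (i == n + 1)) => [/eqP e | _].
  by rewrite (_ : i - 1 == n) // e addrK.
by rewrite !scale0r; case: ifP.
Qed.

Definition disc_top (x : M) : disc_shift M n (n + 1) := [ffun _ => x].

Lemma disc_top_lin : lin_map disc_top.
Proof. by move=> a x y; apply/ffunP => j; rewrite !ffunE. Qed.

Lemma disc_val_top x : disc_val (disc_top x) = x.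
Proof. by rewrite disc_val_const eqxx orbT. Qed.

Lemma disc_d_top x : disc_d (disc_top x) = [ffun _ => sign_int R n *: x].
Proof.
apply/ffunP => j; rewrite !ffunE -[\sum_k _]/(disc_val (disc_top x)).
by rewrite disc_val_top eqxx.
Qed.

Lemma disc_cmor_ext (Y : complex R) (u w : cmor (disc_shift M n) Y) :
  (forall x, u (n + 1) (disc_top x) = w (n + 1) (disc_top x)) ->
  forall i v, u i v = w i v.
Proof.
move=> uw i v; have [e|ne_top] := eqVneq i (n + 1).
  by subst i; rewrite (disc_valK v); exact: uw.
have [e|ne_bot] := eqVneq i n; last first.
  have -> : v = 0 by apply: disc_obj_eq0; rewrite negb_or ne_top ne_bot.
  by rewrite !(lin_map0 (cmap_lin _ _)).
subst i.
(* the bottom copy of [M] is the boundary of the top one *)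
have -> : v = delta_cast (disc_shift M n) (n + 1 - 1) n
              (cd (disc_shift M n) (n + 1) (disc_top (sign_int R n *: disc_val v))).
  by rewrite /= disc_d_top sign_intZK addrK delta_cast_id -disc_valK.
by rewrite !delta_cast_cmap !cmap_comm uw.
Qed.

Section FromDisc.
Variables (Y : complex R) (g : M -> Y (n + 1)).
Hypothesis gl : lin_map g.

(* [g] in degree [n + 1] and [(-1)^n d g] in degree [n]. *)
Definition from_disc_fun i (v : disc_obj M n i) : Y i :=
  delta_cast Y (n + 1) i (g (disc_val v)) +
  delta_cast Y (n + 1 - 1) i (sign_int R n *: cd Y (n + 1) (g (disc_val v))).

Lemma from_disc_lin i : lin_map (@from_disc_fun i).
Proof.
have gvl : lin_map (fun v : disc_obj M n i => g (disc_val v)).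
  exact: lin_map_comp gl (@disc_val_lin _).
apply: lin_map_add; first exact: lin_map_comp (delta_cast_lin _ _ _) gvl.
apply: lin_map_comp (delta_cast_lin _ _ _) _; apply: lin_map_scale.
  exact: sign_int_comm.
exact: lin_map_comp (cd_lin _ _) gvl.
Qed.

Lemma from_disc_comm i (v : disc_obj M n i) :
  from_disc_fun (disc_d v) = cd Y i (from_disc_fun v).
Proof.
rewrite /from_disc_fun disc_val_d; move: (disc_val v) => x.
have [->|ne] := eqVneq i (n + 1).
  rewrite (delta_cast_neq _ (_ : n + 1 != n + 1 - 1)); last by apply/eqP; lia.
  rewrite (delta_cast_neq _ (_ : n + 1 - 1 != n + 1)); last by apply/eqP; lia.
  by rewrite !delta_cast_id add0r addr0 (lin_mapZ gl) (lin_mapZ (cd_lin _ _)) sign_intZK.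
rewrite scale0r (lin_map0 gl) (lin_map0 (cd_lin _ _)) scaler0.
rewrite !delta_cast0 addr0 (delta_cast_neq _ (_ : n + 1 != i)); last by rewrite eq_sym.
rewrite add0r delta_cast_cd (lin_mapZ (cd_lin _ _)) cd_dd scaler0.
by rewrite delta_cast0.
Qed.

Definition from_disc : cmor (disc_shift M n) Y :=
  CMor R (disc_shift M n) Y (@from_disc_fun) from_disc_lin from_disc_comm.

Lemma from_disc_top x : from_disc (n + 1) (disc_top x) = g x.
Proof.
rewrite /= /from_disc_fun delta_cast_id disc_val_const eqxx orbT.
by rewrite (delta_cast_neq _ (_ : n + 1 - 1 != n + 1)) ?addr0 //; apply/eqP; lia.
Qed.

End FromDisc.

Section ToDisc.
Variables (P : complex R) (h : P n -> M).
Hypothesis hl : lin_map h.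

(* [h] in degree [n] and [(-1)^n h d] in degree [n + 1]. *)
Definition to_disc_fun i (p : P i) : disc_obj M n i :=
  [ffun _ => h (delta_cast P i n p) +
             sign_int R n *: h (delta_cast P (i - 1) n (cd P i p))].

Lemma to_disc_lin i : lin_map (@to_disc_fun i).
Proof.
move=> a x y; apply/ffunP => j; rewrite !ffunE.
rewrite cd_lin !delta_cast_lin !hl !scalerDr !scalerA sign_int_comm.
by rewrite -!addrA; congr (_ + _); rewrite addrCA.
Qed.

Lemma to_disc_comm i (p : P i) :
  to_disc_fun (cd P i p) = disc_d (to_disc_fun p).
Proof.
apply/ffunP => j; rewrite /disc_d ffunE -[\sum_k _]/(disc_val (to_disc_fun p)).
rewrite disc_val_const ffunE.
rewrite cd_dd delta_cast0 (lin_map0 hl) scaler0 addr0.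
have [e|ne] := eqVneq i (n + 1).
  subst i; rewrite orbT (delta_cast_neq _ (_ : n + 1 != n)); last by apply/eqP; lia.
  by rewrite (lin_map0 hl) add0r sign_intZK.
rewrite scale0r (delta_cast_neq _ (_ : i - 1 != n)) ?(lin_map0 hl) //.
by apply: contra ne => /eqP <-; rewrite subrK.
Qed.

Definition to_disc : cmor P (disc_shift M n) :=
  CMor R P (disc_shift M n) (@to_disc_fun) to_disc_lin to_disc_comm.

Lemma to_disc_bottom p : disc_val (to_disc n p) = h p.
Proof.
rewrite /= disc_val_const eqxx /= delta_cast_id.
rewrite (delta_cast_neq _ (_ : n - 1 != n)); last by apply/eqP; lia.
by rewrite (lin_map0 hl) scaler0 addr0.
Qed.

End ToDisc.
End Disc.

Section DiscMap.
Variables (R : pzRingType) (X Y : lmodType R) (n : int) (g : X -> Y).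
Hypothesis gl : lin_map g.

Definition disc_map_fun i (v : disc_obj X n i) : disc_obj Y n i := [ffun j => g (v j)].

Lemma disc_map_lin i : lin_map (@disc_map_fun i).
Proof. by move=> a x y; apply/ffunP => j; rewrite !ffunE gl. Qed.

Lemma disc_map_comm i (v : disc_obj X n i) :
  disc_map_fun (disc_d v) = disc_d (disc_map_fun v).
Proof.
apply/ffunP => j; rewrite /disc_map_fun /disc_d !ffunE (lin_mapZ gl) (lin_map_sum gl).
by congr (_ *: _); apply: eq_bigr => l _; rewrite ffunE.
Qed.

Definition disc_map : cmor (disc_shift X n) (disc_shift Y n) :=
  CMor R (disc_shift X n) (disc_shift Y n) (@disc_map_fun) disc_map_lin disc_map_comm.

Lemma disc_map_surj : (forall y, exists x, g x = y) ->
  forall i (v : disc_shift Y n i), exists u, disc_map i u = v.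
Proof.
move=> gs i v; have [x gx] := gs (disc_val v).
exists ([ffun _ => x] : disc_obj X n i); rewrite [RHS]disc_valK.
by apply/ffunP => j; rewrite !ffunE gx.
Qed.

End DiscMap.

Lemma cpx_projective_component (R : pzRingType) (P : complex R) (k : int) :
  cpx_projective P -> mod_projective (P k).
Proof.
move=> PP X Y g gl gs h hl.
have [L gL] := PP _ _ (disc_map k gl) (disc_map_surj gl gs) (to_disc (n := k) hl).
exists (fun p => disc_val (L k p)); split.
  exact: lin_map_comp (@disc_val_lin _ _ _) (cmap_lin L k).
move=> p; rewrite /disc_val (lin_map_sum gl) -(to_disc_bottom hl) -(gL k p).
by rewrite /disc_val; apply: eq_bigr => j _; rewrite ffunE.
Qed.

Section DiscSum.
Variables (R : pzRingType) (Q : int -> lmodType R).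

(* [(+)_n \overline{Q_n}[n]] up to the signs of the differentials: degree [i]
   holds the top copy of [Q_(i-1)] and the bottom copy of [Q_i]. *)
Definition disc_sum_obj (i : int) : lmodType R := (Q (i - 1) * Q i)%type.

Definition disc_sum_d i (p : disc_sum_obj i) : disc_sum_obj (i - 1) := (0, p.1).

Lemma disc_sum_d_lin i : lin_map (@disc_sum_d i).
Proof.
by move=> a [x1 x2] [y1 y2]; rewrite -[RHS]/(a *: 0 + 0, a *: x1 + y1) scaler0 addr0.
Qed.

Lemma disc_sum_dd i (p : disc_sum_obj i) : disc_sum_d (disc_sum_d p) = 0.
Proof. by []. Qed.

Definition disc_sum : complex R :=
  Complex R disc_sum_obj (@disc_sum_d) disc_sum_d_lin disc_sum_dd.

Definition disc_sum_in n (x : Q n) : disc_sum (n + 1) := (delta_cast Q n (n + 1 - 1) x, 0).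
Arguments disc_sum_in : clear implicits.

Lemma disc_sum_in_lin n : lin_map (disc_sum_in n).
Proof. exact: lin_map_comp (@lin_map_inl _ _ _) (delta_cast_lin _ _ _). Qed.
Arguments disc_sum_in_lin : clear implicits.

Section FromDiscSum.
Variables (X : complex R) (b : forall n, Q n -> X (n + 1)).
Arguments b : clear implicits.
Hypothesis bl : forall n, lin_map (b n).
Arguments bl : clear implicits.

Definition from_disc_sum_fun i (p : disc_sum_obj i) : X i :=
  delta_cast X (i - 1 + 1) i (b (i - 1) p.1) +
  delta_cast X (i + 1 - 1) i (cd X (i + 1) (b i p.2)).

Lemma from_disc_sum_lin i : lin_map (@from_disc_sum_fun i).
Proof.
apply: lin_map_add; apply: lin_map_comp (delta_cast_lin _ _ _) _.
  exact: lin_map_comp (bl _) (@lin_map_fst _ _ _).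
exact: lin_map_comp (cd_lin _ _) (lin_map_comp (bl _) (@lin_map_snd _ _ _)).
Qed.

Lemma from_disc_sum_comm i (p : disc_sum_obj i) :
  from_disc_sum_fun (disc_sum_d p) = cd X i (from_disc_sum_fun p).
Proof.
rewrite /from_disc_sum_fun /= (lin_map0 (bl _)) delta_cast0 add0r.
by rewrite (lin_mapD (cd_lin _ _)) !delta_cast_cd cd_dd delta_cast0 addr0.
Qed.

Definition from_disc_sum : cmor disc_sum X :=
  CMor R disc_sum X (@from_disc_sum_fun) from_disc_sum_lin from_disc_sum_comm.

Lemma from_disc_sum_in n x : from_disc_sum (n + 1) (disc_sum_in n x) = b n x.
Proof.
rewrite /= /from_disc_sum_fun /= (lin_map0 (bl _)) (lin_map0 (cd_lin _ _)).
rewrite delta_cast0 addr0.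
by apply: (delta_cast_conj (s := fun j => j + 1) (t := id) b); rewrite addrK.
Qed.

End FromDiscSum.

Lemma disc_sum_cmorE (X : complex R) (u : cmor disc_sum X) i p :
  u i p = from_disc_sum
            (fun n => lin_map_comp (cmap_lin u (n + 1)) (disc_sum_in_lin n)) i p.
Proof.
case: p => x y; rewrite /= /from_disc_sum_fun /= -cmap_comm /=.
have -> : delta_cast X (i - 1 + 1) i (u (i - 1 + 1) (disc_sum_in (i - 1) x)) = u i (x, 0).
  by apply: (delta_cast_conj (s := id) (t := fun j => j - 1)
    (fun j z => u j ((z, 0) : disc_sum_obj j))); rewrite subrK.
have -> : delta_cast X (i + 1 - 1) i
    (u (i + 1 - 1) (disc_sum_d (delta_cast Q i (i + 1 - 1) y, 0))) = u i (0, y).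
  by apply: (delta_cast_conj (s := id) (t := id)
    (fun j z => u j ((0, z) : disc_sum_obj j))); rewrite addrK.
by rewrite -(lin_mapD (cmap_lin u i)) -[(x, 0) + _]/(x + 0, 0 + y) addr0 add0r.
Qed.

Lemma disc_sum_cmor_ext (X : complex R) (u w : cmor disc_sum X) :
  (forall n x, u (n + 1) (disc_sum_in n x) = w (n + 1) (disc_sum_in n x)) ->
  forall i p, u i p = w i p.
Proof.
move=> uw i p; rewrite disc_sum_cmorE [RHS]disc_sum_cmorE /= /from_disc_sum_fun /=.
by rewrite !uw.
Qed.

Lemma disc_sum_projective :
  (forall n, mod_projective (Q n)) -> cpx_projective disc_sum.
Proof.
move=> Qp X Y g gs f.
have [b bP] := dep_functional_choice (P := fun n (b : Q n -> X (n + 1)) =>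
    lin_map b /\ forall x, g (n + 1) (b x) = f (n + 1) (disc_sum_in n x))
  (fun n => Qp _ _ _ _ (cmap_lin g _) (gs _) _
     (lin_map_comp (cmap_lin f _) (disc_sum_in_lin n))).
pose h := from_disc_sum (fun n => proj1 (bP n)).
exists h => i p; apply: (disc_sum_cmor_ext (u := cmor_comp g h)) => n x.
by rewrite cmor_compE from_disc_sum_in (proj2 (bP n)).
Qed.

End DiscSum.
Arguments disc_sum_in {R} Q n x.
Arguments disc_sum_in_lin {R} Q n.

Lemma mod_subprojective_factor_family (R : pzRingType) (M N : int -> lmodType R)
    (g : forall n, M n -> N n) :
  (forall n, lin_map (g n)) -> (forall n, mod_subprojective (M n) (N n)) ->
  exists (Q : int -> lmodType R) (a : forall n, M n -> Q n) (b : forall n, Q n -> N n),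
    [/\ forall n, mod_projective (Q n), forall n, lin_map (a n), forall n, lin_map (b n)
      & forall n x, g n x = b n (a n x)].
Proof.
move=> gl sub.
have [QP QPspec] := dep_functional_choice
  (T := fun n => {Q : lmodType R & ((M n -> Q) * (Q -> N n))%type})
  (P := fun n QP => [/\ mod_projective (projT1 QP), lin_map (projT2 QP).1,
     lin_map (projT2 QP).2 & forall x, g n x = (projT2 QP).2 ((projT2 QP).1 x)])
  (fun n => let: ex_intro P (ex_intro a (ex_intro b spec)) := sub n (g n) (gl n) in
            ex_intro _ (existT _ P (a, b)) spec).
exists (fun n => projT1 (QP n)), (fun n => (projT2 (QP n)).1), (fun n => (projT2 (QP n)).2).
by split=> n; case: (QPspec n).
Qed.

Section Coproduct.
Variables (R : pzRingType) (M : int -> lmodType R) (S : complex R).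
Variable inj : forall n, cmor (disc_shift (M n) n) S.
Hypothesis coP : is_coproduct (fun n => disc_shift (M n) n) S inj.

Lemma coproduct_cmor_ext (Y : complex R) (u w : cmor S Y) :
  (forall n i x, u i (inj n i x) = w i (inj n i x)) -> forall i s, u i s = w i s.
Proof.
move=> uw i s; have [phi [_ phi_uniq]] := coP (fun n => cmor_comp w (inj n)).
by rewrite (phi_uniq u uw) (phi_uniq w).
Qed.

Lemma coproduct_disc_cmor_ext (Y : complex R) (u w : cmor S Y) :
  (forall n x, u (n + 1) (inj n (n + 1) (disc_top n x)) =
               w (n + 1) (inj n (n + 1) (disc_top n x))) ->
  forall i s, u i s = w i s.
Proof.
move=> uw; apply: coproduct_cmor_ext => n.
exact: (disc_cmor_ext (u := cmor_comp u (inj n)) (w := cmor_comp w (inj n)) (uw n)).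
Qed.

Lemma coproduct_disc_lift (Y : complex R) n (f : M n -> Y (n + 1)) : lin_map f ->
  exists phi : cmor S Y, forall x, phi (n + 1) (inj n (n + 1) (disc_top n x)) = f x.
Proof.
move=> fl.
have gl m : lin_map (fun x : M m => delta_cast Y (n + 1) (m + 1) (f (delta_cast M m n x))).
  exact: lin_map_comp (delta_cast_lin _ _ _) (lin_map_comp fl (delta_cast_lin _ _ _)).
have [phi [phiE _]] := coP (fun m => from_disc (gl m)).
by exists phi => x; rewrite phiE from_disc_top !delta_cast_id.
Qed.

Variable N : complex R.

Lemma coproduct_disc_subprojective_components :
  cpx_subprojective S N -> forall n, mod_subprojective (M n) (N (n + 1)).
Proof.
move=> SP n f fl; have [phi phiE] := coproduct_disc_lift fl.
have [P [A [B [PP AB]]]] := SP phi.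
exists (P (n + 1)), (fun x => A (n + 1) (inj n (n + 1) (disc_top n x))), (B (n + 1)).
split; [exact: cpx_projective_component | | exact: cmap_lin |].
  exact: lin_map_comp (cmap_lin A _) (lin_map_comp (cmap_lin (inj n) _) (disc_top_lin n)).
by move=> x; rewrite -AB phiE.
Qed.

Lemma coproduct_disc_subprojective_of_components :
  (forall n, mod_subprojective (M n) (N (n + 1))) -> cpx_subprojective S N.
Proof.
move=> sub f; pose g n x := f (n + 1) (inj n (n + 1) (disc_top n x)).
have gl n : lin_map (g n).
  exact: lin_map_comp (cmap_lin f _) (lin_map_comp (cmap_lin (inj n) _) (disc_top_lin n)).
have [Q [a [b [Qp al bl gab]]]] := mod_subprojective_factor_family gl sub.
have [A [Ain _]] := coP (fun n => from_disc (lin_map_comp (disc_sum_in_lin Q n) (al n))).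
exists (disc_sum Q), A, (from_disc_sum bl); split; first exact: disc_sum_projective.
apply: (coproduct_disc_cmor_ext (w := cmor_comp (from_disc_sum bl) A)) => n x.
by rewrite cmor_compE Ain from_disc_top from_disc_sum_in -gab.
Qed.

End Coproduct.

Unset Implicit Arguments.

Theorem proposition2p4 (R : pzRingType) (N : complex R) (M : int -> lmodType R)
    (S : complex R) (inj : forall n : int, cmor (disc_shift (M n) n) S) :
  is_coproduct (fun n : int => disc_shift (M n) n) S inj ->
  (cpx_subprojective S N <->
   forall n : int, mod_subprojective (M n) (N (n + 1))).
Proof.
move=> coP; split; first exact: coproduct_disc_subprojective_components.
exact: coproduct_disc_subprojective_of_components.
Qed.
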